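(* Let $J$ be a real symmetric $n\times n$ matrix with pairwise distinct eigenvalues, and consider the Euler–Arnold equations $$\dot M = [M,\Omega],\qquad M = \Omega J + J\Omega,$$ with $M,\Omega\in\mathfrak{so}(n)$, $\Omega$ being the unique skew-symmetric matrix with $\Omega J+J\Omega=M$. Then the equilibrium points (relative equilibria) of this system are exactly those $M$ whose $\Omega$ is obtained from the following data: (1) an orthogonal decomposition $\mathbb{R}^n = \left(\bigoplus_{i=1}^{k}\Pi_i\right)\oplus \Pi_0$ in which every $\Pi_i$ ($i=0,\dots,k$) is spanned by principal axes of inertia (eigenvectors of $J$), and every $\Pi_i$ with $i>0$ is nonzero and even-dimensional; (2) for each $i>0$, an angular velocity $\omega_i>0$ and a complex structure $I_i$ on $\Pi_i$ compatible with the Euclidean metric; namely, $\Omega$ acts as $\omega_i I_i$ on $\Pi_i$ for each $i>0$ and as $0$ on $\Pi_0$.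
   Context: $\mathfrak{so}(n)$ denotes the real skew-symmetric $n\times n$ matrices; $[X,Y]=XY-YX$. An equilibrium point means $M$ with $[M,\Omega]=0$. The principal axes of inertia are the eigenvector lines of $J$. A complex structure on a Euclidean space $\Pi$ compatible with the Euclidean metric is an orthogonal linear operator $I\colon\Pi\to\Pi$ with $I^2=-\mathrm{Id}$ (equivalently, a matrix in $\mathfrak{so}(2m)\cap\mathrm{SO}(2m)$ up to orientation conventions, i.e. skew-symmetric and orthogonal). *)

From HB Require Import structures.
From mathcomp Require Import all_boot all_order all_algebra.
From mathcomp Require Import reals.
Set Implicit Arguments. Unset Strict Implicit. Unset Printing Implicit Defensive.
Import Order.TTheory GRing.Theory Num.Theory.
Local Open Scope ring_scope.

Section Defs.
Variables (R : realType) (n : nat).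

(* Vectors of R^n are represented as row vectors 'rV_n; the action of a
   matrix A on x (the column product A x) is written, on rows, as x^T A^T. *)
Definition act (A : 'M[R]_n) (v : 'rV[R]_n) : 'rV[R]_n := v *m A^T.

Definition dot (u v : 'rV[R]_n) : R := (u *m v^T) 0 0.

Definition symmetric_mx (A : 'M[R]_n) : Prop := A^T = A.

Definition skew_mx (A : 'M[R]_n) : Prop := A^T = - A.

Definition commutator (X Y : 'M[R]_n) : 'M[R]_n := X *m Y - Y *m X.

Definition distinct_eigenvalues (J : 'M[R]_n) : Prop :=
  exists s : seq R, [/\ uniq s, size s = n &
     char_poly J = \prod_(a <- s) ('X - a%:P)].

Definition principal_axis (J : 'M[R]_n) (v : 'rV[R]_n) : Prop :=
  v != 0 /\ exists a : R, act J v = a *: v.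

Definition spanned_by_axes (J : 'M[R]_n) (P : 'M[R]_n) : Prop :=
  exists (m : nat) (B : 'M[R]_(m, n)),
    (forall i : 'I_m, principal_axis J (row i B)) /\ (B == P)%MS.

Definition orthogonal_subspaces (P Q : 'M[R]_n) : Prop :=
  forall u v : 'rV[R]_n, (u <= P)%MS -> (v <= Q)%MS -> dot u v = 0.

Definition complex_structure_on (P : 'M[R]_n) (I : 'M[R]_n) : Prop :=
  [/\ forall v, (v <= P)%MS -> (act I v <= P)%MS,
      forall v, (v <= P)%MS -> act I (act I v) = - v &
      forall u v, (u <= P)%MS -> (v <= P)%MS ->
        dot (act I u) (act I v) = dot u v].

(* Omega is obtained from the data of the statement. Pieces Pi_1..Pi_k are
   indexed by 'I_k, Pi_0 is Pi0. *)
Definition relative_equilibrium_form (J Om : 'M[R]_n) : Prop :=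
  exists (k : nat) (Pi : 'I_k -> 'M[R]_n) (Pi0 : 'M[R]_n)
         (omega : 'I_k -> R) (I : 'I_k -> 'M[R]_n),
    [/\
        row_full (\sum_(i < k) Pi i + Pi0)%MS
        /\ (forall i j : 'I_k, i != j -> orthogonal_subspaces (Pi i) (Pi j))
        /\ (forall i : 'I_k, orthogonal_subspaces (Pi i) Pi0),
        (forall i : 'I_k, spanned_by_axes J (Pi i)) /\ spanned_by_axes J Pi0,
        (forall i : 'I_k, (0 < \rank (Pi i))%N /\ ~~ odd (\rank (Pi i))),
        (forall i : 'I_k, 0 < omega i /\ complex_structure_on (Pi i) (I i)) &
        (forall i : 'I_k, forall v, (v <= Pi i)%MS ->
            act Om v = omega i *: act (I i) v)
        /\ (forall v, (v <= Pi0)%MS -> act Om v = 0)].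

End Defs.

From HB Require Import structures.
From mathcomp Require Import all_boot all_order all_algebra.
From mathcomp Require Import reals.
Import Order.TTheory GRing.Theory Num.Theory.
Local Open Scope ring_scope.
Set Implicit Arguments. Unset Strict Implicit. Unset Printing Implicit Defensive.

(* Since [M, Ω] = J Ω² - Ω² J, the equilibria are the Ω whose square commutes
   with J.  As J has a simple spectrum, its orthogonal eigenbasis then also
   diagonalizes Ω², whose eigenvalues are of the form -ω² with ω >= 0 because
   Ω is skew.  Grouping the principal axes by the value of ω gives the pieces
   Π_i (ω = ω_i > 0) and Π_0 (ω = 0).  Ω commutes with Ω², so it preserves
   each Π_i, on which Ω / ω_i is skew with square -1, i.e. a compatible
   complex structure; this forces Π_i to be even-dimensional.  Conversely, Ω²
   is the scalar -ω_i² on each J-invariant piece Π_i, so it commutes with J. *)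

Section EuclideanGeometry.
Variables (R : realType) (n : nat).
Implicit Types (u v w : 'rV[R]_n) (A P : 'M[R]_n).

Lemma dotE u v : dot u v = \sum_k u 0 k * v 0 k.
Proof. by rewrite /dot !mxE; apply: eq_bigr => k _; rewrite !mxE. Qed.

Lemma dotC u v : dot u v = dot v u.
Proof. by rewrite !dotE; apply: eq_bigr => k _; rewrite mulrC. Qed.

Lemma dotZl a u v : dot (a *: u) v = a * dot u v.
Proof. by rewrite !dotE mulr_sumr; apply: eq_bigr => k _; rewrite mxE mulrA. Qed.

Lemma dotZr a u v : dot u (a *: v) = a * dot u v.
Proof. by rewrite dotC dotZl dotC. Qed.

Lemma dotNr u v : dot u (- v) = - dot u v.
Proof. by rewrite -scaleN1r dotZr mulN1r. Qed.

Lemma dot_ge0 u : 0 <= dot u u.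
Proof. by rewrite dotE; apply: sumr_ge0 => k _; rewrite -expr2 sqr_ge0. Qed.

Lemma dot_eq0 u : dot u u = 0 -> u = 0.
Proof.
rewrite dotE => /eqP; rewrite psumr_eq0 => [/allP u0|k _]; last first.
  by rewrite -expr2 sqr_ge0.
apply/rowP => k; rewrite mxE.
by have /= := u0 k (mem_index_enum k); rewrite mulf_eq0 orbb => /eqP.
Qed.

Lemma dot_mulmxl u A v : dot (u *m A) v = dot u (v *m A^T).
Proof. by rewrite /dot -mulmxA trmx_mul trmxK. Qed.

Lemma mulmx_trE m (A B : 'M[R]_(m, n)) i j :
  (A *m B^T) i j = dot (row i A) (row j B).
Proof. by rewrite dotE mxE; apply: eq_bigr => k _; rewrite !mxE. Qed.

Lemma sub_kermx_tr u v : (u <= kermx v^T)%MS = (dot u v == 0).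
Proof.
rewrite sub_kermx; apply/eqP/eqP => [uv0|uv0]; first by rewrite /dot uv0 mxE.
by apply/matrixP => i j; rewrite !ord1 [RHS]mxE.
Qed.

Lemma actZ a A v : act (a *: A) v = a *: act A v.
Proof. by rewrite /act linearZ /= scalemxAr. Qed.

Lemma act_scale a A v : act A (a *: v) = a *: act A v.
Proof. by rewrite /act scalemxAl. Qed.

Lemma dot_act_skew A u v : skew_mx A ->
  dot (act A u) (act A v) = - dot u (act A (act A v)).
Proof. by move=> skA; rewrite /act dot_mulmxl trmxK -dotNr -mulmxN skA opprK. Qed.

Lemma complex_structure_scaled_skew P A (w : R) : skew_mx A -> 0 < w ->
  (forall v, (v <= P)%MS -> (act A v <= P)%MS) ->
  (forall v, (v <= P)%MS -> act A (act A v) = - w ^+ 2 *: v) ->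
  complex_structure_on P (w^-1 *: A).
Proof.
move=> skA w_gt0 PA A2; have w2K : w^-1 * w^-1 * w ^+ 2 = 1.
  by rewrite expr2 mulrACA mulVf ?mul1r // lt0r_neq0.
split=> [v Pv|v Pv|u v Pu Pv]; rewrite !actZ ?act_scale ?scalemx_sub ?PA //.
  by rewrite scalerA A2 // scalerA mulrN w2K scaleN1r.
by rewrite dotZl dotZr dot_act_skew // A2 // dotZr mulNr opprK 2!mulrA w2K mul1r.
Qed.

(* The matrix of [A] on a basis of [P] squares to [-1], so its determinant
   squares to [(-1) ^+ \rank P]. *)
Lemma complex_structure_even_rank P A : complex_structure_on P A ->
  ~~ odd (\rank P).
Proof.
case=> PA A2 _; set B := row_base P.
have BP t : (row t B <= P)%MS by rewrite -(eq_row_base P) row_sub.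
have BA : (B *m A^T <= B)%MS.
  by apply/row_subP => t; rewrite row_mul eq_row_base PA.
set X := B *m A^T *m pinvmx B.
have XB : X *m B = B *m A^T by rewrite mulmxKpV.
have BAA : B *m A^T *m A^T = - B.
  apply/row_matrixP => t; rewrite 2!row_mul; have := A2 _ (BP t); rewrite /act => ->.
  by apply/rowP => k; rewrite !mxE.
have XX : X *m X = (-1)%:M.
  apply: (row_free_inj (row_base_free P)) => /=.
  by rewrite -mulmxA XB mulmxA XB BAA mul_scalar_mx scaleN1r.
have detX2 : \det X ^+ 2 = (-1) ^+ \rank P.
  by rewrite expr2 -det_mulmx XX det_scalar.
apply/negP => odd_rank; move: detX2; rewrite -signr_odd odd_rank expr1 => detX2.
by have := sqr_ge0 (\det X); rewrite detX2 ler0N1.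
Qed.

End EuclideanGeometry.

Section SymmetricEigenbasis.
Variables (R : realType) (n : nat).

Lemma eigenvectors_orthogonal (J : 'M[R]_n) (u v : 'rV[R]_n) a b :
  symmetric_mx J -> u *m J = a *: u -> v *m J = b *: v -> a != b ->
  dot u v = 0.
Proof.
move=> symJ uJ vJ ab; have : a * dot u v = b * dot u v.
  by rewrite -dotZl -uJ dot_mulmxl symJ vJ dotZr.
by move/eqP; rewrite -subr_eq0 -mulrBl mulf_eq0 subr_eq0 (negbTE ab) => /eqP.
Qed.

Lemma symmetric_eigenbasis (J : 'M[R]_n) :
  symmetric_mx J -> distinct_eigenvalues J ->
  exists (V : 'M[R]_n) (s : 'I_n -> R),
    [/\ injective s, forall j, row j V *m J = s j *: row j V,
        forall j, row j V != 0,
        forall i j, i != j -> dot (row i V) (row j V) = 0 & V \in unitmx].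
Proof.
move=> symJ [sp [sp_uniq sp_size charJ]].
pose s (j : 'I_n) := sp`_j.
have s_inj : injective s.
  by move=> i j /eqP; rewrite nth_uniq ?sp_size // => /eqP /val_inj.
have eigv (j : 'I_n) : exists v : 'rV[R]_n, v *m J = s j *: v /\ v != 0.
  have : eigenvalue J (s j).
    by rewrite eigenvalue_root_char charJ root_prod_XsubC mem_nth ?sp_size.
  by case/eigenvalueP => v; exists v.
have [f fP] := fin_all_exists eigv; pose V := \matrix_j f j.
have VJ j : row j V *m J = s j *: row j V by rewrite rowK; case: (fP j).
have V0 j : row j V != 0 by rewrite rowK; case: (fP j).
have Vorth i j : i != j -> dot (row i V) (row j V) = 0.
  move=> ij; apply: eigenvectors_orthogonal symJ (VJ i) (VJ j) _.
  by apply: contra ij => /eqP /s_inj ->.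
exists V, s; split=> //.
have VVt : V *m V^T = diag_mx (\row_j dot (row j V) (row j V)).
  apply/matrixP => i j; rewrite mulmx_trE !mxE.
  by case: (eqVneq i j) => [->|ij]; rewrite ?mulr1n // Vorth ?mulr0n.
have : \det (V *m V^T) != 0.
  rewrite VVt det_diag; apply/prodf_neq0 => j _; rewrite mxE.
  by apply: contra (V0 j) => /eqP /dot_eq0 ->.
by rewrite unitmxE unitfE det_mulmx det_tr mulf_eq0 negb_or => /andP[].
Qed.

(* The coefficients of [w] on the eigenbasis [V] with eigenvalue [d l <> mu]
   vanish, since [w *m (A - mu)] has coefficients [(d l - mu) * coord_l w]. *)
Lemma eigenvector_in_eigenbasis (V A : 'M[R]_n) (d : 'I_n -> R) mu w :
  V \in unitmx -> (forall l, row l V *m A = d l *: row l V) ->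
  w *m A = mu *: w ->
  w = \sum_(l | d l == mu) (w *m invmx V) 0 l *: row l V.
Proof.
move=> Vu VA wA; set a := w *m invmx V.
have wE : w = a *m V by rewrite /a mulmxKV.
pose b := \row_l (a 0 l * (d l - mu)).
have bV : b *m V = 0.
  rewrite mulmx_sum_row.
  have -> : \sum_i b 0 i *: row i V = a *m V *m A - mu *: (a *m V).
    rewrite [a *m V]mulmx_sum_row mulmx_suml scaler_sumr -sumrB.
    apply: eq_bigr => i _.
    by rewrite mxE -scalemxAl VA !scalerA -scalerBl mulrBr [mu * _]mulrC.
  by rewrite -wE wA subrr.
have b0 : b = 0 by rewrite -[b]mulmx1 -(mulmxV Vu) mulmxA bV mul0mx.
rewrite {1}wE mulmx_sum_row (bigID (fun l => d l == mu)) /=.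
rewrite [X in _ + X]big1 ?addr0 // => l dl.
have : b 0 l = 0 by rewrite b0 mxE.
by rewrite mxE => /eqP; rewrite mulf_eq0 subr_eq0 (negbTE dl) orbF => /eqP ->;
  rewrite scale0r.
Qed.

End SymmetricEigenbasis.

Lemma Euler_Arnold_commutator (R : realType) (n : nat) (J M Om : 'M[R]_n) :
  M = Om *m J + J *m Om -> commutator M Om = J *m (Om *m Om) - Om *m Om *m J.
Proof.
move=> ->; rewrite /commutator mulmxDl mulmxDr !mulmxA.
by rewrite [Om *m Om *m J + _]addrC opprD addrACA subrr add0r.
Qed.

Section AxesSpans.
Variables (R : realType) (n : nat) (J V : 'M[R]_n) (s : 'I_n -> R).
Hypotheses (symJ : symmetric_mx J) (VJ : forall j, row j V *m J = s j *: row j V)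
  (V0 : forall j, row j V != 0)
  (Vorth : forall i j, i != j -> dot (row i V) (row j V) = 0).

Definition axes_mx (G : {set 'I_n}) : 'M[R]_(#|G|, n) :=
  \matrix_(t < #|G|) row (enum_val t) V.

Definition axes_span (G : {set 'I_n}) : 'M[R]_n := <<axes_mx G>>%MS.

Lemma row_axes_span (G : {set 'I_n}) j : j \in G -> (row j V <= axes_span G)%MS.
Proof.
move=> jG; rewrite genmxE.
by have := row_sub (enum_rank_in jG j) (axes_mx G); rewrite rowK enum_rankK_in.
Qed.

Lemma axes_span_sub (G : {set 'I_n}) (K : 'M[R]_n) :
  (forall j, j \in G -> (row j V <= K)%MS) -> (axes_span G <= K)%MS.
Proof.
by move=> GK; rewrite genmxE; apply/row_subP => t; rewrite rowK GK ?enum_valP.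
Qed.

Lemma axes_span_mulmx_sub (G : {set 'I_n}) (A K : 'M[R]_n) :
  (forall j, j \in G -> (row j V *m A <= K)%MS) ->
  forall u : 'rV[R]_n, (u <= axes_span G)%MS -> (u *m A <= K)%MS.
Proof.
move=> GAK u; rewrite genmxE => /submxP [x ->].
rewrite -mulmxA; apply: submx_trans (submxMl x _) _; apply/row_subP => t.
by rewrite row_mul rowK GAK ?enum_valP.
Qed.

Lemma axes_span_eigen (G : {set 'I_n}) (A : 'M[R]_n) m :
  (forall j, j \in G -> row j V *m A = m *: row j V) ->
  forall u : 'rV[R]_n, (u <= axes_span G)%MS -> u *m A = m *: u.
Proof.
move=> GA u Gu; apply/eqP; rewrite -subr_eq0 -mul_mx_scalar -mulmxBr -sub_kermx.
apply: submx_trans Gu _; apply: axes_span_sub => j jG.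
by rewrite sub_kermx mulmxBr mul_mx_scalar GA // subrr.
Qed.

Lemma spanned_by_axes_span (G : {set 'I_n}) : spanned_by_axes J (axes_span G).
Proof.
exists #|G|, (axes_mx G); split; last by apply/eqmxP; exact: eqmx_sym (genmxE _).
move=> t; rewrite rowK; split=> //; exists (s (enum_val t)).
by rewrite /act symJ VJ.
Qed.

Lemma orthogonal_axes_span (G H : {set 'I_n}) :
  (forall a b, a \in G -> b \in H -> a != b) ->
  orthogonal_subspaces (axes_span G) (axes_span H).
Proof.
move=> GH u v Gu Hv; apply/eqP; rewrite -sub_kermx_tr.
apply: submx_trans Gu _; apply: axes_span_sub => a aG.
rewrite sub_kermx_tr dotC -sub_kermx_tr; apply: submx_trans Hv _.
by apply: axes_span_sub => b bH; rewrite sub_kermx_tr Vorth // eq_sym GH.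
Qed.

End AxesSpans.

Section Forward.
Variables (R : realType) (n : nat) (J Om V : 'M[R]_n) (s : 'I_n -> R).
Hypotheses (symJ : symmetric_mx J) (skOm : skew_mx Om) (s_inj : injective s)
  (VJ : forall j, row j V *m J = s j *: row j V)
  (V0 : forall j, row j V != 0)
  (Vorth : forall i j, i != j -> dot (row i V) (row j V) = 0)
  (Vu : V \in unitmx)
  (Om2J : J *m (Om *m Om) = Om *m Om *m J).

Let Om2T := Om^T *m Om^T.

Let act2E v : act Om (act Om v) = v *m Om2T.
Proof. by rewrite /act mulmxA. Qed.

(* The squared angular velocity along the [j]-th principal axis, read off as a
   coordinate of [row j V *m Om2T] in the basis [V]; that this vector is
   proportional to [row j V] is [row_Om2T]. *)
Definition omega2 j := - (row j V *m Om2T *m invmx V) 0 j.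

Lemma row_Om2T j : row j V *m Om2T = - omega2 j *: row j V.
Proof.
have Om2TJ : Om2T *m J = J *m Om2T.
  by have := congr1 trmx Om2J; rewrite !trmx_mul symJ /Om2T => ->.
have eigJ : row j V *m Om2T *m J = s j *: (row j V *m Om2T).
  by rewrite -mulmxA Om2TJ mulmxA VJ -scalemxAl.
rewrite opprK {1}(eigenvector_in_eigenbasis Vu VJ eigJ) (big_pred1 j) //.
by move=> l /=; apply/eqP/eqP => [/s_inj|->].
Qed.

Lemma omega2_dot j : omega2 j * dot (row j V) (row j V) =
  dot (act Om (row j V)) (act Om (row j V)).
Proof.
by rewrite dot_act_skew // act2E row_Om2T dotZr mulNr opprK.
Qed.

Lemma omega2_ge0 j : 0 <= omega2 j.
Proof.
have dot_gt0 : 0 < dot (row j V) (row j V).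
  by rewrite lt_def dot_ge0 andbT; apply: contra (V0 j) => /eqP /dot_eq0 ->.
by rewrite -(pmulr_lge0 _ dot_gt0) omega2_dot dot_ge0.
Qed.

Lemma act_axis_eq0 j : omega2 j = 0 -> act Om (row j V) = 0.
Proof. by move=> om0; apply: dot_eq0; rewrite -omega2_dot om0 mul0r. Qed.

Lemma Om2T_eigen_sub (K : 'M[R]_n) m (w : 'rV[R]_n) :
  (forall l, omega2 l = m -> (row l V <= K)%MS) ->
  w *m Om2T = - m *: w -> (w <= K)%MS.
Proof.
move=> K_m wOm2; rewrite (eigenvector_in_eigenbasis Vu row_Om2T wOm2).
apply: summx_sub => l /eqP /oppr_inj ml; exact/scalemx_sub/K_m.
Qed.

Definition rates := undup [seq x <- map omega2 (enum 'I_n) | 0 < x].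

Definition omega (i : 'I_(size rates)) := Num.sqrt rates`_i.

Definition level (i : 'I_(size rates)) := [set l | omega2 l == rates`_i].

Definition piece i := axes_span V (level i).

Definition rest_piece := axes_span V [set l | omega2 l == 0].

Lemma rates_gt0 (i : 'I_(size rates)) : 0 < rates`_i.
Proof.
by have := mem_nth 0 (ltn_ord i); rewrite mem_undup mem_filter => /andP[].
Qed.

Lemma mem_rates j : 0 < omega2 j -> omega2 j \in rates.
Proof. by move=> om_gt0; rewrite mem_undup mem_filter om_gt0 map_f ?mem_enum. Qed.

Lemma omega_gt0 i : 0 < omega i.
Proof. by rewrite sqrtr_gt0 rates_gt0. Qed.

Lemma row_full_pieces : row_full (\sum_(i < size rates) piece i + rest_piece)%MS.
Proof.
rewrite -sub1mx; apply: submx_trans (_ : V <= _)%MS; first by rewrite sub1mx row_full_unit.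
apply/row_subP => j; have := omega2_ge0 j; rewrite le_eqVlt => /orP[/eqP om0|om_gt0].
  by apply: submx_trans (addsmxSr _ _); apply: row_axes_span; rewrite inE -om0.
have jrate : (index (omega2 j) rates < size rates)%N by rewrite index_mem mem_rates.
apply: submx_trans (addsmxSl _ _) ; apply: (sumsmx_sup (Ordinal jrate)) => //.
by apply: row_axes_span; rewrite inE /= nth_index ?mem_rates.
Qed.

Lemma orthogonal_pieces i i' : i != i' -> orthogonal_subspaces (piece i) (piece i').
Proof.
move=> ii'; apply: (orthogonal_axes_span Vorth) => a b; rewrite !inE => /eqP ra /eqP rb.
apply: contra ii' => /eqP ab; apply/eqP/val_inj/eqP.
by rewrite -(nth_uniq 0 (ltn_ord i) (ltn_ord i') (undup_uniq _)) -ra -rb ab.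
Qed.

Lemma orthogonal_piece_rest i : orthogonal_subspaces (piece i) rest_piece.
Proof.
apply: (orthogonal_axes_span Vorth) => a b; rewrite !inE => /eqP ra /eqP rb.
by apply/eqP => ab; have := rates_gt0 i; rewrite -ra ab rb ltxx.
Qed.

Lemma rank_piece_gt0 i : (0 < \rank (piece i))%N.
Proof.
have /mapP[j _ rj] : rates`_i \in map omega2 (enum 'I_n).
  by have := mem_nth 0 (ltn_ord i); rewrite mem_undup mem_filter => /andP[].
rewrite lt0n mxrank_eq0; apply: contra (V0 j) => /eqP piece0.
by rewrite -submx0 -piece0 row_axes_span // inE -rj.
Qed.

Lemma act_piece_sub i v : (v <= piece i)%MS -> (act Om v <= piece i)%MS.
Proof.
apply: axes_span_mulmx_sub => j; rewrite inE => /eqP rj.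
apply: (Om2T_eigen_sub (m := omega2 j)).
  by move=> l rl; apply: row_axes_span; rewrite inE rl rj.
by rewrite -mulmxA [Om^T *m _]mulmxA -/Om2T mulmxA row_Om2T -scalemxAl.
Qed.

Lemma act2_piece i v : (v <= piece i)%MS ->
  act Om (act Om v) = - omega i ^+ 2 *: v.
Proof.
rewrite act2E sqr_sqrtr ?ltW ?rates_gt0 //.
by apply: axes_span_eigen => j; rewrite inE => /eqP <-; apply: row_Om2T.
Qed.

Lemma act_rest_piece v : (v <= rest_piece)%MS -> act Om v = 0.
Proof.
move=> v0; rewrite -(scale0r v); move: v v0; apply: axes_span_eigen => j.
by rewrite inE scale0r => /eqP /act_axis_eq0.
Qed.

Lemma complex_structure_piece i :
  complex_structure_on (piece i) ((omega i)^-1 *: Om).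
Proof.
apply: complex_structure_scaled_skew skOm (omega_gt0 i) _ _.
  exact: act_piece_sub.
exact: act2_piece.
Qed.

Lemma relative_equilibrium_of_commute : relative_equilibrium_form J Om.
Proof.
exists (size rates), piece, rest_piece, omega, (fun i => (omega i)^-1 *: Om).
split.
- split; first exact: row_full_pieces.
  by split; [exact: orthogonal_pieces | exact: orthogonal_piece_rest].
- by split => [i|]; apply: spanned_by_axes_span.
- move=> i; split; first exact: rank_piece_gt0.
  exact: complex_structure_even_rank (complex_structure_piece i).
- by move=> i; split; [exact: omega_gt0 | exact: complex_structure_piece].
- split; last exact: act_rest_piece.
  by move=> i v _; rewrite actZ scalerA divff ?scale1r // lt0r_neq0 ?omega_gt0.
Qed.

End Forward.

Section Backward.
Variables (R : realType) (n : nat).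
Implicit Types (J Om S P : 'M[R]_n).

Lemma spanned_by_axes_mulmx_sub J P : symmetric_mx J -> spanned_by_axes J P ->
  forall u : 'rV[R]_n, (u <= P)%MS -> (u *m J <= P)%MS.
Proof.
move=> symJ [m [B [axesB /eqmxP eqBP]]] u; rewrite -eqBP => /submxP[x ->].
rewrite -mulmxA; apply: submx_trans (submxMl x _) _; apply/row_subP => t.
have [_ [a]] := axesB t; rewrite row_mul /act symJ => ->.
by apply: scalemx_sub; rewrite -eqBP row_sub.
Qed.

Lemma scalar_on_stable_sub_kermx J S P c :
  (forall u : 'rV[R]_n, (u <= P)%MS -> (u *m J <= P)%MS) ->
  (forall u : 'rV[R]_n, (u <= P)%MS -> u *m S = c *: u) ->
  (P <= kermx (S *m J - J *m S))%MS.
Proof.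
move=> PJ PS; apply/row_subP => t; have Pt := row_sub t P.
by rewrite sub_kermx mulmxBr !mulmxA PS // -scalemxAl PS ?PJ // subrr.
Qed.

Lemma commute_of_relative_equilibrium J Om : symmetric_mx J ->
  relative_equilibrium_form J Om -> J *m (Om *m Om) = Om *m Om *m J.
Proof.
move=> symJ [k [Pi [Pi0 [om [I [[full _] [axesPi axesPi0] _ cplx [OmPi OmPi0]]]]]]].
set S := Om^T *m Om^T.
have piS i (u : 'rV[R]_n) : (u <= Pi i)%MS -> u *m S = - om i ^+ 2 *: u.
  have [_ [PiI I2 _]] := cplx i; move=> Piu.
  rewrite /S mulmxA -/(act Om u) (OmPi i) // -scalemxAl -/(act Om _).
  by rewrite (OmPi i) ?PiI // I2 // scalerA scalerN -expr2 scaleNr.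
have pi0S (u : 'rV[R]_n) : (u <= Pi0)%MS -> u *m S = 0 *: u.
  by move=> Pi0u; rewrite /S mulmxA -/(act Om u) OmPi0 // mul0mx scale0r.
have : (\sum_(i < k) Pi i + Pi0 <= kermx (S *m J - J *m S))%MS.
  rewrite addsmx_sub; apply/andP; split; last first.
    exact: scalar_on_stable_sub_kermx (spanned_by_axes_mulmx_sub symJ axesPi0) pi0S.
  apply/sumsmx_subP => i _.
  exact: scalar_on_stable_sub_kermx (spanned_by_axes_mulmx_sub symJ (axesPi i)) (piS i).
move/(submx_trans (submx_full 1%:M full)); rewrite sub_kermx mul1mx subr_eq0.
by move/eqP/(congr1 trmx); rewrite /S !trmx_mul trmxK symJ => ->.
Qed.

End Backward.

Theorem corollary1 (R : realType) (n : nat) (J : 'M[R]_n)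
    (hJsym : symmetric_mx J) (hJdist : distinct_eigenvalues J)
    (M Om : 'M[R]_n) (hM : skew_mx M) (hOm : skew_mx Om)
    (hMOm : M = Om *m J + J *m Om) :
  commutator M Om = 0 <-> relative_equilibrium_form J Om.
Proof.
rewrite (Euler_Arnold_commutator hMOm); split=> [/eqP|].
  rewrite subr_eq0 => /eqP Om2J.
  have [V [s [s_inj VJ V0 Vorth Vu]]] := symmetric_eigenbasis hJsym hJdist.
  exact: relative_equilibrium_of_commute hJsym hOm s_inj VJ V0 Vorth Vu Om2J.
by move/(commute_of_relative_equilibrium hJsym) ->; rewrite subrr.
Qed.
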